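(* Let $p_0,p_1,p_2,T>0$, $q_k=p_k^{-1/2}$, $\Omega>0$, and let $$C=\tfrac1{16q_0^2}\Big[\big(1+\tfrac{q_0}{q_1}\big)^2\big(1+\tfrac{q_1}{q_2}\big)^2+\big(1-\tfrac{q_0}{q_1}\big)^2\big(1-\tfrac{q_1}{q_2}\big)^2\Big],\quad K=\tfrac1{8q_0^2}\big(1-\tfrac{q_0^2}{q_1^2}\big)\big(1-\tfrac{q_1^2}{q_2^2}\big),\quad \zeta=2q_1T,$$ $R=K/C$ and $J(s)=\frac1{2\pi}\int_0^{\Omega^{1/2}}\frac{e^{isu}}{C+K\cos\zeta u}\,du$ for $s\in\mathbb{R}$. Then for $s\in\mathbb{R}$, $$J(s)=\frac{\Omega^{1/2}}{2C\pi}\sum_{m=0}^\infty\sum_{l=0}^m\Big(-\frac R2\Big)^m\binom ml e^{i\frac{\Omega^{1/2}}2(s+(m-2l)\zeta)}\operatorname{sinc}\Big(\tfrac{\Omega^{1/2}}2(s+(m-2l)\zeta)\Big).$$ Moreover, if $J_M$ denotes the partial sum of this series over $0\le m\le M$, then $$\sup_{s\in\mathbb{R}}|J(s)-J_M(s)|\le\frac{\Omega^{1/2}}{2C\pi}\frac{|R|^{M+1}}{1-|R|}.$$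
   Context: $\operatorname{sinc}x=\frac{\sin x}{x}$ (with $\operatorname{sinc}0=1$). (These quantities are such that $|R|<1$.) *)

From Stdlib Require Import Reals.
From Coquelicot Require Import Coquelicot.
Open Scope R_scope.

Definition qk (p : R) : R := / sqrt p.

Definition Cconst (q0 q1 q2 : R) : R :=
  / (16 * q0 ^ 2) *
  ((1 + q0 / q1) ^ 2 * (1 + q1 / q2) ^ 2 + (1 - q0 / q1) ^ 2 * (1 - q1 / q2) ^ 2).

Definition Kconst (q0 q1 q2 : R) : R :=
  / (8 * q0 ^ 2) * (1 - q0 ^ 2 / q1 ^ 2) * (1 - q1 ^ 2 / q2 ^ 2).

Definition cis (theta : R) : C := (cos theta, sin theta).

Definition sinc (x : R) : R := if Req_EM_T x 0 then 1 else sin x / x.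

Definition Jfun (Cv Kv zeta Om s : R) : C :=
  (RtoC (/ (2 * PI)) *
   @RInt C_R_CompleteNormedModule
     (fun u => (cis (s * u) / RtoC (Cv + Kv * cos (zeta * u)))%C) 0 (sqrt Om))%C.

(* the (m,l) summand, without the prefactor Omega^{1/2}/(2 C pi) *)
Definition Jterm (Cv Kv zeta Om s : R) (m l : nat) : C :=
  let Rv := Kv / Cv in
  let x := sqrt Om / 2 * (s + (INR m - 2 * INR l) * zeta) in
  (RtoC ((- (Rv / 2)) ^ m * Binomial.C m l) * cis x * RtoC (sinc x))%C.

Definition Jinner (Cv Kv zeta Om s : R) (m : nat) : C :=
  sum_n (fun l => Jterm Cv Kv zeta Om s m l) m.

Definition Jpref (Cv Om : R) : R := sqrt Om / (2 * Cv * PI).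

Definition JM (Cv Kv zeta Om : R) (M : nat) (s : R) : C :=
  (RtoC (Jpref Cv Om) * sum_n (fun m => Jinner Cv Kv zeta Om s m) M)%C.

From Stdlib Require Import Reals Lra Lia.
From Coquelicot Require Import Coquelicot.
Open Scope R_scope.

(* Since C - K and C + K are positive squares, |R| < 1 and the integrand expands as the geometric
   series e^{isu} / (C + K cos(zeta u)) = (1/C) sum_m e^{isu} (-R cos(zeta u))^m, whose tail after
   m = M is bounded by |R|^(M+1) / (C (1 - |R|)) uniformly in u.  Writing
   (2 cos y)^m = sum_l binom(m,l) e^{i (m - 2 l) y} turns each term into a combination of
   exponentials e^{i (s + (m - 2 l) zeta) u}, and the integral of e^{iau} over [0, W] is
   W e^{iaW/2} sinc(aW/2).  Integrating the tail bound gives the error estimate, which in turn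
   gives the convergence of the series. *)

Ltac fold_Cplus := change (@plus C_AbelianMonoid) with Cplus in *.
Ltac as_C_eq := match goal with |- ?a = ?b => change (@eq C a b) end.
Ltac Cring := fold_Cplus; as_C_eq; ring.

Lemma sum_n_Cmult_l (c : C) (f : nat -> C) (n : nat) :
  (c * sum_n f n)%C = sum_n (fun k => c * f k)%C n.
Proof. symmetry; exact (sum_n_mult_l (K := C_Ring) c f n). Qed.

Lemma RtoC_sum_n (f : nat -> R) (n : nat) :
  RtoC (sum_n f n) = sum_n (fun k => RtoC (f k)) n.
Proof.
  induction n as [|n IH]; [now rewrite !sum_O|].
  rewrite !sum_Sn, <- IH. apply RtoC_plus.
Qed.

Lemma sum_n_Sl {G : AbelianMonoid} (a : nat -> G) (n : nat) :
  sum_n a (S n) = plus (a O) (sum_n (fun l => a (S l)) n).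
Proof.
  unfold sum_n. rewrite (sum_Sn_m a) by lia. now rewrite sum_n_m_S.
Qed.

Lemma Cpow_1_plus_binomial (z : C) (m : nat) :
  Cpow (1 + z) m = sum_n (fun l => RtoC (Binomial.C m l) * Cpow z l)%C m.
Proof.
  induction m as [|m IH].
  { rewrite sum_O, C_n_0. simpl. ring. }
  (* The cut-off at l = m is needed because [Binomial.C m (S m)] is not 0. *)
  set (D := fun l => if Nat.ltb l m then (RtoC (Binomial.C m (S l)) * Cpow z (S l))%C else 0%C).
  assert (Hsplit : sum_n (fun l => RtoC (Binomial.C m l) * Cpow z l)%C m = (1 + sum_n D m)%C).
  { destruct m as [|k].
    - rewrite !sum_O, C_n_0. unfold D; simpl. ring.
    - rewrite sum_n_Sl, sum_Sn. fold_Cplus. unfold D at 2. rewrite Nat.ltb_irrefl, C_n_0.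
      rewrite Cplus_0_r. simpl (Cpow z 0). rewrite Cmult_1_r. f_equal.
      apply sum_n_ext_loc. intros l Hl. unfold D.
      replace (Nat.ltb l (S k)) with true by (symmetry; apply Nat.ltb_lt; lia). reflexivity. }
  assert (Hpascal : sum_n (fun l => RtoC (Binomial.C (S m) l) * Cpow z l)%C (S m)
                    = (1 + z * sum_n (fun l => RtoC (Binomial.C m l) * Cpow z l)%C m + sum_n D m)%C).
  { rewrite sum_n_Sl, C_n_0, sum_n_Cmult_l. fold_Cplus.
    rewrite <- Cplus_assoc, <- (sum_n_plus (G := C_AbelianMonoid)).
    simpl (Cpow z 0). rewrite Cmult_1_r.
    f_equal. apply sum_n_ext_loc. intros l Hl. unfold D.
    destruct (Nat.ltb l m) eqn:E.
    - apply Nat.ltb_lt in E. rewrite <- pascal by exact E. rewrite RtoC_plus.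
      rewrite Cpow_S. Cring.
    - apply Nat.ltb_ge in E. assert (l = m) by lia. subst l. rewrite !C_n_n.
      rewrite Cpow_S. Cring. }
  rewrite Hpascal, Cpow_S, IH, Hsplit. ring.
Qed.

Lemma cis_add (a b : R) : (cis a * cis b)%C = cis (a + b).
Proof. unfold cis. rewrite cos_plus, sin_plus. apply injective_projections; simpl; ring. Qed.

Lemma cis_pow (a : R) (n : nat) : Cpow (cis a) n = cis (INR n * a).
Proof.
  induction n as [|n IH].
  - unfold cis. rewrite Rmult_0_l, cos_0, sin_0. reflexivity.
  - rewrite Cpow_S, IH, cis_add, S_INR. f_equal. ring.
Qed.

Lemma Cmod_cis (a : R) : Cmod (cis a) = 1.
Proof.
  unfold Cmod, cis; simpl fst; simpl snd.
  rewrite <- sqrt_1, <- (sin2_cos2 a). f_equal. unfold Rsqr. ring.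
Qed.

(* 2 cos y = e^{iy} (1 + e^{-2iy}), then expand by the binomial theorem. *)
Lemma sum_binomial_cis (y : R) (m : nat) :
  sum_n (fun l => RtoC (Binomial.C m l) * cis ((INR m - 2 * INR l) * y))%C m
  = RtoC ((2 * cos y) ^ m).
Proof.
  assert (Hcos : RtoC (2 * cos y) = (cis y * (1 + cis (-2 * y)))%C).
  { rewrite Cmult_plus_distr_l, Cmult_1_r, cis_add.
    replace (y + -2 * y) with (- y) by ring.
    unfold cis. rewrite cos_neg, sin_neg. apply injective_projections; simpl; ring. }
  rewrite RtoC_pow, Hcos, Cpow_mult_l, Cpow_1_plus_binomial, sum_n_Cmult_l.
  apply sum_n_ext. intros l.
  rewrite !cis_pow.
  replace ((INR m - 2 * INR l) * y) with (INR m * y + INR l * (-2 * y)) by ring.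
  rewrite <- cis_add. Cring.
Qed.

Local Notation is_RInt_C := (@is_RInt C_R_NormedModule).

Lemma is_RInt_C_pair (f : R -> C) (a b : R) (l : C) :
  is_RInt (fun u => fst (f u)) a b (fst l) ->
  is_RInt (fun u => snd (f u)) a b (snd l) ->
  is_RInt_C f a b l.
Proof. destruct l; exact (is_RInt_fct_extend_pair f a b _ _). Qed.

Lemma is_RInt_Cmult_l (f : R -> C) (a b : R) (c l : C) :
  is_RInt_C f a b l -> is_RInt_C (fun u => c * f u)%C a b (c * l)%C.
Proof.
  intros Hf.
  pose proof (is_RInt_fct_extend_fst f a b l Hf) as H1.
  pose proof (is_RInt_fct_extend_snd f a b l Hf) as H2.
  destruct c as [c1 c2]. apply is_RInt_C_pair; simpl.
  - exact (is_RInt_minus _ _ _ _ _ _ (is_RInt_scal _ _ _ c1 _ H1) (is_RInt_scal _ _ _ c2 _ H2)).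
  - exact (is_RInt_plus _ _ _ _ _ _ (is_RInt_scal _ _ _ c1 _ H2) (is_RInt_scal _ _ _ c2 _ H1)).
Qed.

Lemma is_RInt_sum_n {V : NormedModule R_AbsRing} (F : nat -> R -> V) (I : nat -> V)
    (a b : R) (n : nat) :
  (forall k, (k <= n)%nat -> is_RInt (F k) a b (I k)) ->
  is_RInt (fun u => sum_n (fun k => F k u) n) a b (sum_n I n).
Proof.
  induction n as [|n IH]; intros HF.
  - rewrite sum_O. apply (is_RInt_ext (F 0%nat)); [intros; now rewrite sum_O | now apply HF].
  - rewrite sum_Sn. apply (is_RInt_ext (fun u => plus (sum_n (fun k => F k u) n) (F (S n) u))).
    + intros; now rewrite sum_Sn.
    + apply is_RInt_plus; [apply IH; intros; apply HF|apply HF]; lia.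
Qed.

(* The two [sum_n] below live in different (convertible) monoid structures on [C]. *)
Lemma is_RInt_C_sum_n (F : nat -> R -> C) (I : nat -> C) (a b : R) (n : nat) :
  (forall k, (k <= n)%nat -> is_RInt_C (F k) a b (I k)) ->
  is_RInt_C (fun u => sum_n (fun k => F k u) n) a b (sum_n I n).
Proof. exact (is_RInt_sum_n F I a b n). Qed.

Lemma ex_RInt_C_continuous (f : R -> C) (a b : R) :
  (forall u, continuous (fun t => fst (f t)) u) ->
  (forall u, continuous (fun t => snd (f t)) u) ->
  ex_RInt (V := C_R_NormedModule) f a b.
Proof.
  intros H1 H2. exists (RInt (fun t => fst (f t)) a b, RInt (fun t => snd (f t)) a b).
  apply is_RInt_C_pair; apply (RInt_correct (V := R_CompleteNormedModule));
    apply ex_RInt_continuous; auto.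
Qed.

Lemma Rmult_sinc (x : R) : x * sinc x = sin x.
Proof.
  unfold sinc. destruct (Req_EM_T x 0) as [->|Hx].
  - now rewrite sin_0, Rmult_0_l.
  - field. exact Hx.
Qed.

Lemma is_RInt_cis (a W : R) :
  is_RInt_C (fun u => cis (a * u)) 0 W (W * (cis (W / 2 * a) * sinc (W / 2 * a)))%C.
Proof.
  destruct (Req_dec a 0) as [->|Ha].
  - replace (W / 2 * 0) with 0 by ring. unfold sinc. destruct (Req_EM_T 0 0) as [_|]; [|easy].
    apply (is_RInt_ext (fun _ => RtoC 1)).
    + intros u _. unfold cis. now rewrite Rmult_0_l, cos_0, sin_0.
    + replace (W * (cis 0 * 1))%C with (scal (W - 0) (RtoC 1)).
      * exact (@is_RInt_const C_R_NormedModule 0 W (RtoC 1)).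
      * unfold cis. rewrite cos_0, sin_0.
        apply injective_projections; simpl; unfold scal; simpl; unfold mult; simpl; ring.
  - set (x := W / 2 * a).
    assert (HW : W = 2 / a * x) by (unfold x; field; exact Ha).
    assert (HaW : a * W = 2 * x) by (unfold x; field).
    pose proof (Rmult_sinc x) as Hsinc.
    apply is_RInt_C_pair; simpl.
    + match goal with
      | |- is_RInt _ _ _ ?l => replace l with (minus (sin (a * W) / a) (sin (a * 0) / a))
      end.
      * apply (is_RInt_derive (fun u => sin (a * u) / a)).
        -- intros u _. auto_derive; [easy|]. field. exact Ha.
        -- intros u _. apply (ex_derive_continuous (fun u => cos (a * u))). auto_derive. easy.
      * unfold minus, plus, opp; simpl. rewrite HaW, Rmult_0_r, sin_0, sin_2a, <- Hsinc, HW.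
        field. exact Ha.
    + match goal with
      | |- is_RInt _ _ _ ?l => replace l with (minus (- cos (a * W) / a) (- cos (a * 0) / a))
      end.
      * apply (is_RInt_derive (fun u => - cos (a * u) / a)).
        -- intros u _. auto_derive; [easy|]. field. exact Ha.
        -- intros u _. apply (ex_derive_continuous (fun u => sin (a * u))). auto_derive. easy.
      * unfold minus, plus, opp; simpl. rewrite HaW, Rmult_0_r, cos_0, cos_2a_sin, <- Hsinc, HW.
        field. exact Ha.
Qed.

Lemma norm_C_R (z : C) : norm (K := R_AbsRing) (V := C_R_NormedModule) z = Cmod z.
Proof.
  destruct z as [x y].
  change (sqrt (Rabs x ^ 2 + Rabs y ^ 2) = sqrt (x ^ 2 + y ^ 2)).
  now rewrite !pow2_abs.
Qed.

Lemma geometric_tail_le (x r : R) (M : nat) :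
  Rabs x <= r -> r < 1 ->
  Rabs (/ (1 - x) - sum_n (fun m => x ^ m) M) <= r ^ S M / (1 - r).
Proof.
  intros Hx Hr.
  assert (H1x : 0 < 1 - r <= 1 - x) by (pose proof (Rle_abs x); lra).
  rewrite sum_n_Reals, tech3 by lra.
  replace (/ (1 - x) - (1 - x ^ S M) / (1 - x)) with (x ^ S M / (1 - x)) by (field; lra).
  unfold Rdiv. rewrite Rabs_mult, Rabs_inv, <- RPow_abs, (Rabs_pos_eq (1 - x)) by lra.
  apply Rmult_le_compat.
  - apply pow_le, Rabs_pos.
  - left. apply Rinv_0_lt_compat. lra.
  - apply pow_incr. split; [apply Rabs_pos | exact Hx].
  - apply Rinv_le_contravar; lra.
Qed.

Lemma Rabs_div_lt_1 (x y : R) : Rabs x < y -> Rabs (x / y) < 1.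
Proof.
  intros Hxy. assert (Hy : 0 < y) by (pose proof (Rabs_pos x); lra).
  unfold Rdiv. rewrite Rabs_mult, Rabs_inv, (Rabs_pos_eq y) by lra.
  rewrite <- (Rinv_r y) by lra. apply Rmult_lt_compat_r; [apply Rinv_0_lt_compat|]; lra.
Qed.

Lemma Jpref_pos (Cv Om : R) : 0 < Cv -> 0 < Om -> 0 < Jpref Cv Om.
Proof.
  intros HC HOm. apply Rdiv_lt_0_compat; [now apply sqrt_lt_R0|].
  pose proof PI_RGT_0. nra.
Qed.

Lemma is_series_C_of_geometric_error (a : nat -> C) (L : C) (c r : R) :
  0 <= r < 1 -> (forall n, Cmod (L - sum_n a n) <= c * r ^ n) -> is_series a L.
Proof.
  intros Hr Herr. apply (filterlim_locally_ball_norm (K := C_AbsRing) (U := C_NormedModule)).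
  intros eps.
  assert (Heps : 0 < eps / (Rabs c + 1))
    by (apply Rdiv_lt_0_compat; [apply cond_pos | pose proof (Rabs_pos c); lra]).
  destruct (pow_lt_1_zero r ltac:(rewrite Rabs_pos_eq; lra) _ Heps) as [N HN].
  exists N. intros n Hn. unfold ball_norm.
  change (Cmod (sum_n a n - L) < eps).
  rewrite <- Cmod_opp. replace (- (sum_n a n - L))%C with (L - sum_n a n)%C by ring.
  specialize (HN n Hn). rewrite Rabs_pos_eq in HN by (apply pow_le; lra).
  apply Rle_lt_trans with (c * r ^ n); [apply Herr|].
  apply Rle_lt_trans with ((Rabs c + 1) * r ^ n).
  - apply Rmult_le_compat_r; [apply pow_le; lra | pose proof (Rle_abs c); lra].
  - apply (Rmult_lt_compat_l (Rabs c + 1)) in HN; [|pose proof (Rabs_pos c); lra].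
    replace ((Rabs c + 1) * (eps / (Rabs c + 1))) with (pos eps) in HN
      by (field; pose proof (Rabs_pos c); lra).
    exact HN.
Qed.

Lemma qk_pos (p : R) : 0 < p -> 0 < qk p.
Proof. intros Hp. apply Rinv_0_lt_compat, sqrt_lt_R0, Hp. Qed.

(* With a = q0/q1, b = q1/q2: C - K = ((a + b) / (2 q0))^2 and C + K = ((1 + a b) / (2 q0))^2. *)
Lemma Rabs_Kconst_lt_Cconst (q0 q1 q2 : R) :
  0 < q0 -> 0 < q1 -> 0 < q2 -> Rabs (Kconst q0 q1 q2) < Cconst q0 q1 q2.
Proof.
  intros H0 H1 H2. unfold Cconst, Kconst.
  replace (q0 ^ 2 / q1 ^ 2) with ((q0 / q1) ^ 2) by (field; lra).
  replace (q1 ^ 2 / q2 ^ 2) with ((q1 / q2) ^ 2) by (field; lra).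
  replace (/ (8 * q0 ^ 2)) with (2 * / (16 * q0 ^ 2)) by (field; lra).
  assert (Ha : 0 < q0 / q1) by (apply Rdiv_lt_0_compat; auto).
  assert (Hb : 0 < q1 / q2) by (apply Rdiv_lt_0_compat; auto).
  assert (Hc : 0 < / (16 * q0 ^ 2)) by (apply Rinv_0_lt_compat; nra).
  set (a := q0 / q1) in *. set (b := q1 / q2) in *. set (c := / (16 * q0 ^ 2)) in *.
  apply Rabs_def1.
  - assert (0 < c * (2 * (a + b)) ^ 2) by (apply Rmult_lt_0_compat; [|apply pow_lt]; lra).
    nra.
  - assert (0 < c * (2 * (1 + a * b)) ^ 2) by (apply Rmult_lt_0_compat; [|apply pow_lt]; nra).
    nra.
Qed.

Definition Jratio (Cv Kv zeta u : R) : R := - (Kv / Cv) * cos (zeta * u).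

Section JSeries.

Variables (Cv Kv zeta Om s : R).

Lemma is_RInt_Jinner (m : nat) :
  is_RInt_C (fun u => cis (s * u) * RtoC (Jratio Cv Kv zeta u ^ m))%C 0 (sqrt Om)
    (sqrt Om * Jinner Cv Kv zeta Om s m)%C.
Proof.
  set (coef l := RtoC ((- (Kv / Cv / 2)) ^ m * Binomial.C m l)).
  unfold Jinner. rewrite sum_n_Cmult_l.
  apply (is_RInt_ext (V := C_R_NormedModule)
    (fun u => @sum_n C_AbelianMonoid
       (fun l => coef l * cis ((s + (INR m - 2 * INR l) * zeta) * u))%C m)).
  - intros u _. unfold Jratio.
    replace ((- (Kv / Cv) * cos (zeta * u)) ^ m) with ((- (Kv / Cv / 2)) ^ m * (2 * cos (zeta * u)) ^ m)
      by (rewrite <- Rpow_mult_distr; f_equal; generalize (Kv / Cv); intro; field).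
    rewrite RtoC_mult, <- sum_binomial_cis, !sum_n_Cmult_l.
    as_C_eq. apply sum_n_ext. intros l. unfold coef.
    replace ((s + (INR m - 2 * INR l) * zeta) * u) with (s * u + (INR m - 2 * INR l) * (zeta * u))
      by ring.
    rewrite RtoC_mult, <- cis_add. Cring.
  - apply is_RInt_C_sum_n. intros l _.
    unfold Jterm; cbv zeta.
    set (x := sqrt Om / 2 * (s + (INR m - 2 * INR l) * zeta)).
    replace (sqrt Om * _)%C with (coef l * (sqrt Om * (cis x * sinc x)))%C by (unfold coef; Cring).
    apply is_RInt_Cmult_l, is_RInt_cis.
Qed.

Lemma is_RInt_Jpartial (M : nat) :
  is_RInt_C (fun u => cis (s * u) * RtoC (sum_n (fun m => (Jratio Cv Kv zeta u ^ m)%R) M))%C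
    0 (sqrt Om) (sqrt Om * sum_n (fun m => Jinner Cv Kv zeta Om s m) M)%C.
Proof.
  rewrite sum_n_Cmult_l.
  apply (is_RInt_ext (V := C_R_NormedModule) (fun u => @sum_n C_AbelianMonoid
    (fun m => cis (s * u) * RtoC (Jratio Cv Kv zeta u ^ m))%C M)).
  - intros u _. now rewrite RtoC_sum_n, sum_n_Cmult_l.
  - apply is_RInt_C_sum_n. intros m _. apply is_RInt_Jinner.
Qed.

Hypothesis Rabs_Kv_lt_Cv : Rabs Kv < Cv.

Let Cv_pos : 0 < Cv.
Proof. pose proof (Rabs_pos Kv); lra. Qed.

Let ratio_lt_1 : Rabs (Kv / Cv) < 1.
Proof. now apply Rabs_div_lt_1. Qed.

Lemma Rabs_Jratio_le (u : R) : Rabs (Jratio Cv Kv zeta u) <= Rabs (Kv / Cv).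
Proof.
  unfold Jratio. rewrite Rabs_mult, Rabs_Ropp.
  rewrite <- (Rmult_1_r (Rabs (Kv / Cv))) at 2.
  apply Rmult_le_compat_l; [apply Rabs_pos | apply Rabs_le, COS_bound].
Qed.

Lemma one_sub_Jratio_pos (u : R) : 0 < 1 - Jratio Cv Kv zeta u.
Proof. pose proof (Rabs_Jratio_le u); pose proof (Rle_abs (Jratio Cv Kv zeta u)); lra. Qed.

Lemma Cv_add_Kv_cos (u : R) : Cv + Kv * cos (zeta * u) = Cv * (1 - Jratio Cv Kv zeta u).
Proof. unfold Jratio. field. lra. Qed.

Lemma ex_RInt_Jintegrand :
  ex_RInt (V := C_R_NormedModule) (fun u => cis (s * u) / RtoC (Cv + Kv * cos (zeta * u)))%C
    0 (sqrt Om).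
Proof.
  apply (ex_RInt_ext (fun u => cis (s * u) * RtoC (/ (Cv * (1 - Jratio Cv Kv zeta u))))%C).
  - intros u _. rewrite Cv_add_Kv_cos, RtoC_inv; [easy|].
    apply Rgt_not_eq, Rmult_lt_0_compat; [exact Cv_pos | apply one_sub_Jratio_pos].
  - apply ex_RInt_C_continuous; intros u; simpl;
      apply (ex_derive_continuous (V := R_NormedModule)); pose proof (one_sub_Jratio_pos u) as Hu;
      unfold Jratio in *; auto_derive; nra.
Qed.

Lemma Cmod_Jintegrand_sub_partial_le (M : nat) (u : R) :
  Cmod (cis (s * u) / RtoC (Cv + Kv * cos (zeta * u))
        - RtoC (/ Cv) * (cis (s * u) * RtoC (sum_n (fun m => (Jratio Cv Kv zeta u ^ m)%R) M)))%C
    <= / Cv * (Rabs (Kv / Cv) ^ S M / (1 - Rabs (Kv / Cv))).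
Proof.
  set (x := Jratio Cv Kv zeta u).
  assert (Hx : 0 < 1 - x) by apply one_sub_Jratio_pos.
  replace (_ - _)%C with (cis (s * u) * RtoC (/ Cv * (/ (1 - x) - sum_n (fun m => x ^ m) M))%R)%C.
  2: { rewrite Cv_add_Kv_cos. fold x. unfold Cdiv.
       rewrite <- RtoC_inv by (apply Rgt_not_eq, Rmult_lt_0_compat; lra).
       rewrite Rinv_mult, RtoC_mult, RtoC_minus, RtoC_mult. Cring. }
  rewrite Cmod_mult, Cmod_cis, Cmod_R, Rmult_1_l, Rabs_mult, Rabs_inv, Rabs_pos_eq by lra.
  apply Rmult_le_compat_l; [left; apply Rinv_0_lt_compat, Cv_pos|].
  apply geometric_tail_le; [apply Rabs_Jratio_le | exact ratio_lt_1].
Qed.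

Lemma Cmod_Jfun_sub_JM_le (M : nat) :
  Cmod (Jfun Cv Kv zeta Om s - JM Cv Kv zeta Om M s)%C
    <= Jpref Cv Om * (Rabs (Kv / Cv) ^ S M / (1 - Rabs (Kv / Cv))).
Proof.
  set (r := Rabs (Kv / Cv)). set (W := sqrt Om).
  set (Sigma := sum_n (fun m => Jinner Cv Kv zeta Om s m) M).
  set (I := RInt (V := C_R_CompleteNormedModule)
              (fun u => cis (s * u) / RtoC (Cv + Kv * cos (zeta * u)))%C 0 W).
  assert (Hr : r < 1) by exact ratio_lt_1.
  assert (HPI : 0 < PI) by exact PI_RGT_0.
  assert (Herr : Cmod (I - RtoC (/ Cv) * (RtoC W * Sigma)) <= (W - 0) * (/ Cv * (r ^ S M / (1 - r)))).
  { pose proof (is_RInt_minus _ _ _ _ _ _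
                  (RInt_correct (V := C_R_CompleteNormedModule) _ _ _ ex_RInt_Jintegrand)
                  (is_RInt_Cmult_l _ _ _ (RtoC (/ Cv)) _ (is_RInt_Jpartial M))) as Hdiff.
    rewrite <- norm_C_R.
    refine (norm_RInt_le_const _ 0 W _ _ (sqrt_pos Om) _ Hdiff).
    intros u _. rewrite norm_C_R. apply Cmod_Jintegrand_sub_partial_le. }
  replace (Jfun Cv Kv zeta Om s - JM Cv Kv zeta Om M s)%C
    with (RtoC (/ (2 * PI)) * (I - RtoC (/ Cv) * (RtoC W * Sigma)))%C.
  2: { unfold Jfun, JM, Jpref. fold W I Sigma.
       replace (W / (2 * Cv * PI)) with (/ (2 * PI) * (/ Cv * W)) by (field; lra).
       rewrite !RtoC_mult. ring. }
  rewrite Cmod_mult, Cmod_R, Rabs_pos_eq by (left; apply Rinv_0_lt_compat; lra).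
  apply Rle_trans with (/ (2 * PI) * ((W - 0) * (/ Cv * (r ^ S M / (1 - r))))).
  - apply Rmult_le_compat_l; [left; apply Rinv_0_lt_compat; lra | exact Herr].
  - right. unfold Jpref. fold W. field. lra.
Qed.

Lemma is_series_Jinner : 0 < Om ->
  is_series (fun m => Jinner Cv Kv zeta Om s m) (RtoC (/ Jpref Cv Om) * Jfun Cv Kv zeta Om s)%C.
Proof.
  intros HOm.
  set (p := Jpref Cv Om). set (J := Jfun Cv Kv zeta Om s). set (r := Rabs (Kv / Cv)).
  assert (Hr : r < 1) by exact ratio_lt_1.
  assert (Hp : 0 < p) by (now apply Jpref_pos).
  assert (Hpp : (RtoC (/ p) * RtoC p = 1)%C) by (rewrite <- RtoC_mult, Rinv_l; [easy | lra]).
  apply (is_series_C_of_geometric_error _ _ (r / (1 - r)) r); [split; [apply Rabs_pos | exact Hr]|].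
  intros n.
  assert (Hscale : (RtoC (/ p) * J - sum_n (fun m => Jinner Cv Kv zeta Om s m) n)%C
                   = (RtoC (/ p) * (J - JM Cv Kv zeta Om n s))%C).
  { unfold JM; fold p. set (Sn := sum_n _ n).
    transitivity (RtoC (/ p) * J - (RtoC (/ p) * RtoC p) * Sn)%C; [rewrite Hpp|]; ring. }
  rewrite Hscale, Cmod_mult, Cmod_R, Rabs_pos_eq by (left; apply Rinv_0_lt_compat, Hp).
  apply Rle_trans with (/ p * (p * (r ^ S n / (1 - r)))).
  - apply Rmult_le_compat_l; [left; apply Rinv_0_lt_compat, Hp | apply Cmod_Jfun_sub_JM_le].
  - right. simpl. field. split; [lra | exact (Rgt_not_eq _ _ Hp)].
Qed.

End JSeries.

Theorem theorem4p2 (p0 p1 p2 T Om : R) :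
  0 < p0 -> 0 < p1 -> 0 < p2 -> 0 < T -> 0 < Om ->
  let q0 := qk p0 in let q1 := qk p1 in let q2 := qk p2 in
  let Cv := Cconst q0 q1 q2 in
  let Kv := Kconst q0 q1 q2 in
  let zeta := 2 * q1 * T in
  let Rv := Kv / Cv in
  (forall s : R, exists S : C,
      is_series (fun m => Jinner Cv Kv zeta Om s m) S /\
      Jfun Cv Kv zeta Om s = (RtoC (Jpref Cv Om) * S)%C) /\
  (forall (M : nat) (s : R),
      Cmod (Jfun Cv Kv zeta Om s - JM Cv Kv zeta Om M s)%C
        <= Jpref Cv Om * (Rabs Rv ^ (S M) / (1 - Rabs Rv))).
Proof.
  intros H0 H1 H2 _ HOm q0 q1 q2 Cv Kv zeta Rv.
  assert (HKC : Rabs Kv < Cv) by (apply Rabs_Kconst_lt_Cconst; apply qk_pos; assumption).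
  split.
  - intros s. exists (RtoC (/ Jpref Cv Om) * Jfun Cv Kv zeta Om s)%C.
    split; [now apply is_series_Jinner|].
    assert (Hp : Jpref Cv Om <> 0).
    { apply Rgt_not_eq, Jpref_pos; [pose proof (Rabs_pos Kv); lra | exact HOm]. }
    rewrite Cmult_assoc, <- RtoC_mult, Rinv_r, Cmult_1_l by exact Hp. reflexivity.
  - intros M s. now apply Cmod_Jfun_sub_JM_le.
Qed.
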